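(* For every $k\in\omega\setminus\{0\}$, $h^d(T_k)\ge k-1$, where $h$ is the depth.
   Context: Notation: $\omega=\{0,1,2,\dots\}$; $\mathcal P(\omega)$ is the set of nonempty finite subsets of $\omega$; $E_2=\{0,1\}$. $P=\{f_i:i\in\omega\}$ is a set of attributes. Decision tables: $\mathcal M_2^\infty$ is the set of rectangular tables filled with numbers from $E_2$, whose columns are labeled with pairwise different attributes from $P$, whose rows are pairwise different, and each row of which is labeled with a set from $\mathcal P(\omega)$ (its set of decisions). The empty table is denoted $\Lambda$. For $T\in\mathcal M_2^\infty$: $\Pi(T)$ is the intersection of the decision sets of all rows (common decisions); $\mathrm{At}(T)$ is the set of attributes labeling columns. For nonempty $T$ and a word $\alpha=(f_{i_1},\delta_1)\cdots(f_{i_m},\delta_m)$ with $f_{i_j}\in\mathrm{At}(T)$, $\delta_j\in E_2$, $T\alpha$ is the subtable consisting of the rows having value $\delta_j$ in column $f_{i_j}$ for all $j$; $T\lambda=T$ for the empty word $\lambda$. Decision trees: a $2$-decision tree is a finite directed rooted tree with at least two nodes in which the root and the edges leaving the root are unlabeled, each terminal node is labeled with a decision from $\omega$, and each other node is labeled with an attribute from $P$, each edge leaving such a node being labeled with a number from $E_2$. $\mathrm{At}(\Gamma)$ is the set of attributes labeling nodes of $\Gamma$. For a complete path $\tau=v_1,d_1,\dots,v_m,d_m,v_{m+1}$ (from the root to a terminal node), $\pi(\tau)=\lambda$ if $m=1$, and otherwise $\pi(\tau)=(f_{i_2},\delta_2)\cdots(f_{i_m},\delta_m)$ where $v_j$ is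 labeled $f_{i_j}$ and $d_j$ is labeled $\delta_j$; $T(\tau)=T\pi(\tau)$. For $T\ne\Lambda$, a deterministic decision tree for $T$ is a $2$-decision tree $\Gamma$ with $\mathrm{At}(\Gamma)\subseteq\mathrm{At}(T)$ in which exactly one edge leaves the root, edges leaving any node that is neither the root nor terminal are labeled with pairwise different numbers, every row of $T$ belongs to $T(\tau)$ for some complete path $\tau$, and for every complete path $\tau$ either $T(\tau)=\Lambda$ or the decision at the terminal node of $\tau$ belongs to $\Pi(T(\tau))$. The depth of $\Gamma$ is $h(\Gamma)=\max_\tau|\pi(\tau)|$; $h^d(T)$ is the minimum depth of a deterministic decision tree for $T$. The graph $G_k$ and table $T_k$ ($k\ge1$): $G_k$ is a directed graph whose nodes are arranged in $k$ layers, layer $s$ ($1\le s\le k$) containing $s$ nodes; the nodes are numbered $1,\dots,m(k)$, $m(k)=k(k+1)/2$, layer by layer from the top and from left to right within a layer (so the $j$th node of layer $s$ has number $s(s-1)/2+j$). For a node $i$ that is the $j$th node of layer $s<k$, its left child $l(i)$ is the $j$th node of layer $s+1$ and its right child $p(i)$ is the $(j+1)$th node of layer $s+1$; the edges of $G_k$ go from each node to its two children. Define $\nu_k:E_2^{m(k)}\to\mathcal P(\omega)$: for $\bar\delta=(\delta_1,\dots,\delta_{m(k)})$, $\nu_k(\bar\delta)\subseteq\{0,1,\dots,m(k)\}$, where $0\in\nu_k(\bar\delta)$ iff $\delta_1=0$; for a node $i$ not in layer $k$, $i\in\nu_k(\bar\delta)$ iff $\delta_i=1$ and $\delta_{l(i)}=\delta_{p(i)}=0$;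 for a node $i$ in layer $k$, $i\in\nu_k(\bar\delta)$ iff $\delta_i=1$. $T_k\in\mathcal M_2^\infty$ is the table with $m(k)$ columns labeled $f_1,\dots,f_{m(k)}$ (column $f_i$ corresponding to node $i$), whose rows are all $2^{m(k)}$ tuples of $E_2^{m(k)}$, each row $\bar\delta$ labeled with $\nu_k(\bar\delta)$. *)

From mathcomp Require Import all_boot.
Set Implicit Arguments. Unset Strict Implicit. Unset Printing Implicit Defensive.

(** Attribute f_i is represented by its index i : nat; decisions are nats.
    A row is a pair (values, decision set): the values are listed in the order
    of the column labels [tat T]; the decision set is a finite list of nats. *)
Definition row := (seq bool * seq nat)%type.

Record table := Table { tat : seq nat ; trows : seq row }.

(** Well-formedness of a table in M_2^infty (not needed by the statement, given
    for documentation; T_k below satisfies it). *)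
Definition table_wf (T : table) : bool :=
  [&& uniq (tat T), uniq (trows T) &
      all (fun r => (size r.1 == size (tat T)) && (r.2 != [::])) (trows T)].

Definition rval (T : table) (r : row) (i : nat) : bool :=
  nth false r.1 (index i (tat T)).

Definition word := seq (nat * bool).

Definition sat (T : table) (r : row) (a : word) : bool :=
  all (fun p => rval T r p.1 == p.2) a.

Definition subrows (T : table) (a : word) : seq row :=
  [seq r <- trows T | sat T r a].

Definition in_Pi (rs : seq row) (d : nat) : bool := all (fun r => d \in r.2) rs.

(** The root of a deterministic decision tree has exactly one outgoing edge;
    we represent the whole tree by the subtree [t] hanging below that edge.
    A [DLeaf d] is a terminal node labelled with decision d; a [DNode i c0 c1]
    is a node labelled with attribute f_i whose outgoing edges are labelled 0
    (to c0, if present) and 1 (to c1, if present); labels are thus pairwise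
    different. *)
Inductive dtree :=
| DLeaf of nat
| DNode of nat & option dtree & option dtree.

Fixpoint dt_wf (t : dtree) : bool :=
  match t with
  | DLeaf _ => true
  | DNode _ c0 c1 =>
      [&& isSome c0 || isSome c1,
          (if c0 is Some t0 then dt_wf t0 else true) &
          (if c1 is Some t1 then dt_wf t1 else true)]
  end.

Fixpoint dt_attrs (t : dtree) : seq nat :=
  match t with
  | DLeaf _ => [::]
  | DNode i c0 c1 =>
      i :: (if c0 is Some t0 then dt_attrs t0 else [::])
        ++ (if c1 is Some t1 then dt_attrs t1 else [::])
  end.

(** complete paths: pairs (pi(tau), decision at the terminal node of tau) *)
Fixpoint dt_paths (t : dtree) : seq (word * nat) :=
  match t with
  | DLeaf d => [:: ([::], d)]
  | DNode i c0 c1 =>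
      (if c0 is Some t0 then [seq ((i, false) :: p.1, p.2) | p <- dt_paths t0] else [::])
   ++ (if c1 is Some t1 then [seq ((i, true) :: p.1, p.2) | p <- dt_paths t1] else [::])
  end.

Definition dt_depth (t : dtree) : nat := \max_(p <- dt_paths t) size p.1.

Definition is_det_tree (T : table) (t : dtree) : bool :=
  [&& dt_wf t,
      all (fun i => i \in tat T) (dt_attrs t),
      all (fun r => has (fun p => sat T r p.1) (dt_paths t)) (trows T) &
      all (fun p => (subrows T p.1 == [::]) || in_Pi (subrows T p.1) p.2)
          (dt_paths t)].

Definition mk (k : nat) : nat := k * k.+1 %/ 2.

(** number of the j-th node (1 <= j <= s) of layer s *)
Definition node_num (s j : nat) : nat := s * s.-1 %/ 2 + j.

Fixpoint all_tuples (n : nat) : seq (seq bool) :=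
  match n with
  | 0 => [:: [::]]
  | n'.+1 => [seq b :: s | b <- [:: false; true], s <- all_tuples n']
  end.

(** delta_i for the 1-based node number i *)
Definition dval (delta : seq bool) (i : nat) : bool := nth false delta i.-1.

Definition nu (k : nat) (delta : seq bool) : seq nat :=
  (if ~~ dval delta 1 then [:: 0] else [::]) ++
  [seq node_num sj.1 sj.2 |
     sj <- [seq (s, j) | s <- iota 1 k, j <- iota 1 s] &
     dval delta (node_num sj.1 sj.2) &&
     ((sj.1 < k) ==> (~~ dval delta (node_num sj.1.+1 sj.2) &&
                      ~~ dval delta (node_num sj.1.+1 sj.2.+1)))].

Definition Tk (k : nat) : table :=
  Table (iota 1 (mk k)) [seq (d, nu k d) | d <- all_tuples (mk k)].

From mathcomp Require Import all_boot zify.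
Set Implicit Arguments. Unset Strict Implicit. Unset Printing Implicit Defensive.

(** A choice of k-1 left/right moves from the top node of G_k is a path to
    the bottom layer; the row of T_k that is 1 exactly on the nodes
    of such a path has the endpoint of the path as its only decision.  Against
    a decision tree, an adversary answers 0 at node i whenever some path still
    consistent with the answers avoids i, and 1 otherwise; then the consistent
    paths are exactly those avoiding the nodes answered 0.  Fewer than k-1
    queries forbid at most k-2 nodes, and a path avoiding fewer forbidden nodes
    than its length can always be rerouted to a different endpoint: either the
    straight path on the other side of its first move is free, or it contains a
    forbidden node lying outside the subtriangle below the first move, which
    can be discarded before inducting there.  So the leaf reached contains two
    rows with different singleton decision sets. *)

Definition tri (a : nat) : nat := a * a.-1 %/ 2.

Lemma triS a : tri a.+1 = tri a + a.
Proof.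
rewrite /tri /=.
have -> : a.+1 * a = a * 2 + a * a.-1 by case: a => [|a] //=; lia.
by rewrite divnMDl // addnC.
Qed.

Lemma leq_tri : {homo tri : a b / a <= b}.
Proof.
move=> a b /subnK <-; elim: (b - a) => [|d IH]; first by [].
by rewrite addSn triS (leq_trans IH) ?leq_addr.
Qed.

Lemma node_numE s j : node_num s j = tri s + j.
Proof. by []. Qed.

Lemma node_num_gt0 a c : 0 < c -> 0 < node_num a c.
Proof. by rewrite node_numE addn_gt0 orbC => ->. Qed.

Lemma mkE k : mk k = tri k.+1.
Proof. by rewrite /mk /tri /= mulnC. Qed.

Lemma node_num_lt a c a' c' : c <= a -> 0 < c' -> a < a' ->
  node_num a c < node_num a' c'.
Proof. by rewrite !node_numE => ca c'0 /leq_tri; rewrite triS; lia. Qed.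

Lemma node_num_inj a c a' c' : 0 < c <= a -> 0 < c' <= a' ->
  node_num a c = node_num a' c' -> (a, c) = (a', c').
Proof.
move=> /andP [c0 ca] /andP [c0' ca'] E.
case: (ltngtP a a') => [lt|lt|eq_a].
- by have := node_num_lt ca c0' lt; rewrite E ltnn.
- by have := node_num_lt ca' c0 lt; rewrite E ltnn.
- by move: E; rewrite -eq_a !node_numE => /addnI ->.
Qed.

Lemma node_num_le_mk a c k : c <= a -> a <= k -> node_num a c <= mk k.
Proof.
rewrite node_numE mkE => ca ak; have := @leq_tri a.+1 k.+1 ak; rewrite triS; lia.
Qed.

(* The nodes visited from the j-th node of layer s by the moves bs,
   false = left child, true = right child. *)
Fixpoint chain (s j : nat) (bs : seq bool) : seq (nat * nat) :=
  (s, j) :: (if bs is b :: bs' then chain s.+1 (j + b) bs' else [::]).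

Lemma chain_range s j bs a c : (a, c) \in chain s j bs ->
  [/\ s <= a <= s + size bs, j <= c & c + s <= j + a].
Proof.
elim: bs s j => [|b bs IH] s j /=; rewrite inE.
  by move=> /eqP [-> ->]; split; lia.
by case/orP => [/eqP [-> ->]|/IH [? ? ?]]; split; lia.
Qed.

Lemma chain_valid s j bs a c : 0 < j <= s -> (a, c) \in chain s j bs -> 0 < c <= a.
Proof. by move=> sj /chain_range [? ? ?]; lia. Qed.

Lemma chain_head s j bs : (s, j) \in chain s j bs.
Proof. by case: bs => [|b bs]; rewrite /= inE eqxx. Qed.

Lemma chain_last s j bs : (s + size bs, j + count id bs) \in chain s j bs.
Proof.
elim: bs s j => [|b bs IH] s j /=; first by rewrite !addn0 inE.
by rewrite inE addnA -addSnnS IH orbT.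
Qed.

Lemma chain_succ s j bs a c : (a, c) \in chain s j bs -> a < s + size bs ->
  ((a.+1, c) \in chain s j bs) || ((a.+1, c.+1) \in chain s j bs).
Proof.
elim: bs s j => [|b bs IH] s j /=; rewrite inE; first by move=> /eqP [-> _]; lia.
case/orP => [/eqP [-> ->] _|/IH + a_lt]; last first.
  by rewrite addSnnS => /(_ a_lt) /orP [] q; rewrite !in_cons q ?orbT.
by case: b; case: bs {IH} => [|? ?]; rewrite /= !inE ?addn0 ?addn1 eqxx ?orbT.
Qed.

Lemma chain_same_layer s j bs (a c c' : nat) : (a, c) \in chain s j bs ->
  (a, c') \in chain s j bs -> c = c'.
Proof.
elim: bs s j => [|b bs IH] s j /=; rewrite !inE; first by move=> /eqP [_ ->] /eqP [_ ->].
case/orP => [/eqP [-> ->]|q] /orP [/eqP q'_eq|q']; first by case: q'_eq => ->.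
- by case/chain_range: q'; lia.
- by case: q'_eq => a_s _; case/chain_range: q; lia.
- exact: IH q q'.
Qed.

(* A straight chain keeps its column (b = false) or its offset c - a (b = true). *)
Lemma chain_nseq b s j m a c : (a, c) \in chain s j (nseq m b) ->
  c + s * b = j + a * b.
Proof.
elim: m s j => [|m IH] s j /=; rewrite inE; first by move=> /eqP [-> ->].
by case/orP => [/eqP [-> ->] //|/IH]; case: b {IH}; lia.
Qed.

Definition chain_nums s j bs : seq nat := [seq node_num q.1 q.2 | q <- chain s j bs].

Lemma chain_nums_of s j bs a c : (a, c) \in chain s j bs -> node_num a c \in chain_nums s j bs.
Proof. exact: (map_f (fun q : nat * nat => node_num q.1 q.2)). Qed.

Definition avoids (F : seq nat) s j bs : bool := ~~ has [in F] (chain_nums s j bs).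

Lemma avoids_cons F s j b bs :
  avoids F s j (b :: bs) = (node_num s j \notin F) && avoids F s.+1 (j + b) bs.
Proof. by rewrite /avoids /= negb_or. Qed.

Lemma avoids_sub F F' s j bs : {subset F' <= F} -> avoids F s j bs -> avoids F' s j bs.
Proof. by move=> sub; apply: contra => /hasP [x x_in /sub x_F]; apply/hasP; exists x. Qed.

Lemma avoids_rem F f s j bs : f \notin chain_nums s j bs ->
  avoids (rem f F) s j bs -> avoids F s j bs.
Proof.
move=> f_off; apply: contra => /hasP [x x_in x_F]; apply/hasP; exists x => //.
by apply: rem_mem x_F; apply: contraNneq f_off => <-.
Qed.

Lemma mem_chain_nums s j bs a c : 0 < j <= s -> 0 < c <= a ->
  (node_num a c \in chain_nums s j bs) = ((a, c) \in chain s j bs).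
Proof.
move=> sj ca; apply/mapP/idP => [[[a' c'] q /node_num_inj E]|q]; last by exists (a, c).
by rewrite E // (chain_valid sj q).
Qed.

Lemma straight_chain_off (b : bool) s j m bs x : 0 < j <= s ->
  x \in chain_nums s.+1 (j + b) bs -> x \notin chain_nums s j (nseq m (~~ b)).
Proof.
move=> sj /mapP [[a c] q ->] /=.
have [sa jc cj] := chain_range q.
rewrite mem_chain_nums //; last by apply: chain_valid q; lia.
by apply/negP => /chain_nseq; case: b jc cj {q}; lia.
Qed.

Lemma two_chain_endpoints n s j (F : seq nat) : 0 < j <= s -> size F < n ->
  (exists2 bs, size bs = n & avoids F s j bs) ->
  exists bs1 bs2, [/\ size bs1 = n, size bs2 = n, avoids F s j bs1,
    avoids F s j bs2 & count id bs1 != count id bs2].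
Proof.
elim: n s j F => [|n IH] s j F sj F_lt [[|b bs] // [size_bs]].
rewrite avoids_cons => /andP [top_F av_bs].
set alt := nseq n.+1 (~~ b).
have [av_alt|/negPn /hasP [f f_alt f_F]] := boolP (avoids F s j alt).
  exists (b :: bs), alt; split => //; rewrite ?size_nseq ?avoids_cons ?top_F //=.
  - by rewrite size_bs.
  - rewrite count_nseq; have := count_size id bs; rewrite size_bs.
    by case: b {alt av_bs av_alt}; lia.
have sub_j : 0 < j + b <= s.+1 by lia.
have f_off bs' : f \notin chain_nums s.+1 (j + b) bs'.
  by apply/negP => /(straight_chain_off n.+1 sj); rewrite f_alt.
have rem_lt : size (rem f F) < n.
  by rewrite size_rem // -ltnS prednK //; case: F f_F {F_lt top_F av_bs}.
have rem_av : exists2 bs', size bs' = n & avoids (rem f F) s.+1 (j + b) bs'.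
  by exists bs => //; apply: avoids_sub av_bs; apply: mem_rem.
have [bs1 [bs2 [size1 size2 av1 av2 ne12]]] := IH _ _ _ sub_j rem_lt rem_av.
exists (b :: bs1), (b :: bs2); rewrite !avoids_cons top_F /= size1 size2 eqn_add2l.
by split => //; apply: avoids_rem.
Qed.

Lemma dtree_nested_ind (P : dtree -> Prop) :
  (forall d, P (DLeaf d)) ->
  (forall i c0 c1, oapp P True c0 -> oapp P True c1 -> P (DNode i c0 c1)) ->
  forall t, P t.
Proof.
move=> P_leaf P_node; fix IH 1 => - [d|i c0 c1]; first exact: P_leaf.
by apply: P_node; [case: c0 | case: c1] => //= t; apply: IH.
Qed.

Definition covers (T : table) (t : dtree) (r : row) : bool :=
  has (fun p => sat T r p.1) (dt_paths t).

Lemma sat_cons T r i b (w : word) : sat T r ((i, b) :: w) = (rval T r i == b) && sat T r w.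
Proof. by []. Qed.

Lemma covers_node T i c0 c1 r :
  covers T (DNode i c0 c1) r = oapp (covers T ^~ r) false (if rval T r i then c1 else c0).
Proof.
have no_path (s : seq (word * nat)) : has (fun=> false) s = false by elim: s.
rewrite /covers /= has_cat; case: c0 c1 => [t0|] [t1|] /=; rewrite ?has_map /preim /=;
  by case: (rval T r i); rewrite /= ?no_path ?orbF.
Qed.

Definition zeros (w : word) : word := [seq q <- w | ~~ q.2].

Lemma size_zeros w : size (zeros w) <= size w.
Proof. by rewrite size_filter count_size. Qed.

(* The adversary answers 0 whenever some remaining row of S allows it; the rows
   it keeps are those consistent with the 0-answers [zeros p.1] alone. *)
Lemma adversary_path T (S : seq row) t : S != [::] -> {in S, forall r, covers T t r} ->
  exists2 p, p \in dt_paths t &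
    has (fun r => sat T r (zeros p.1)) S /\
    {in S, forall r, sat T r (zeros p.1) -> sat T r p.1}.
Proof.
elim/dtree_nested_ind: t S => [d|i c0 c1 IH0 IH1] S S_ne S_cov.
  by exists ([::], d); rewrite ?inE // has_predT lt0n size_eq0.
pose S0 := [seq r <- S | ~~ rval T r i].
have [S0_nil|S0_ne] := eqVneq S0 [::].
  have /hasPn S_i : ~~ has (fun r => ~~ rval T r i) S by rewrite has_filter -/S0 S0_nil.
  have {}S_i r : r \in S -> rval T r i by move/S_i/negbNE.
  have /hasP [r0 r0_S _] : has predT S by rewrite has_predT lt0n size_eq0.
  have := S_cov r0 r0_S; rewrite covers_node S_i //.
  case: c1 IH1 S_cov => [t1 IH1 S_cov _|//].
  have S_cov1 : {in S, forall r, covers T t1 r}.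
    by move=> r r_S; have := S_cov r r_S; rewrite covers_node S_i.
  have [p p_t1 [has_p all_p]] := IH1 S S_ne S_cov1.
  exists ((i, true) :: p.1, p.2); first by rewrite /= mem_cat (map_f _ p_t1) orbT.
  by split=> // r r_S /all_p; rewrite sat_cons S_i //; apply.
have /hasP [r0 r0_S0 _] : has predT S0 by rewrite has_predT lt0n size_eq0.
move: (r0_S0); rewrite mem_filter => /andP [r0_i r0_S].
have := S_cov r0 r0_S; rewrite covers_node (negbTE r0_i).
case: c0 IH0 S_cov => [t0 IH0 S_cov _|//].
have S0_cov : {in S0, forall r, covers T t0 r}.
  move=> r; rewrite mem_filter => /andP [r_i r_S].
  by have := S_cov r r_S; rewrite covers_node (negbTE r_i).
have [p p_t0 [has_p all_p]] := IH0 S0 S0_ne S0_cov.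
exists ((i, false) :: p.1, p.2); first by rewrite /= mem_cat (map_f _ p_t0).
split=> [|r r_S] /=.
  case/hasP: has_p => r; rewrite mem_filter => /andP [r_i r_S] r_sat.
  by apply/hasP; exists r; rewrite // eqbF_neg r_i.
by rewrite eqbF_neg => /andP [r_i /all_p ->]; rewrite ?r_i // mem_filter r_i.
Qed.

Lemma mem_all_tuples m (d : seq bool) : (d \in all_tuples m) = (size d == m).
Proof.
elim: m d => [|m IH] d; first by rewrite inE size_eq0.
apply/allpairsP/idP => [[[b s] [_ /= s_m ->]]|]; first by rewrite /= eqSS -IH.
by case: d => [|b d] //= d_m; exists (b, d); rewrite /= IH; split=> //; case: b.
Qed.

Lemma all_tuples_nseq m (b : bool) : nseq m b \in all_tuples m.
Proof. by rewrite mem_all_tuples size_nseq. Qed.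

Section ChainRows.

Variables (n : nat) (bs : seq bool).
Hypothesis size_bs : size bs = n.

Definition chain_vec : seq bool := [seq x \in chain_nums 1 1 bs | x <- iota 1 (mk n.+1)].

Definition chain_row : row := (chain_vec, nu n.+1 chain_vec).

Lemma chain_row_in : chain_row \in trows (Tk n.+1).
Proof. by apply: map_f; rewrite mem_all_tuples size_map size_iota. Qed.

Lemma chain_nums_bound x : x \in chain_nums 1 1 bs -> 0 < x <= mk n.+1.
Proof.
move=> /mapP [[a c] q ->] /=; have [? ? ?] := chain_range q.
by rewrite (@node_num_le_mk a c n.+1) ?andbT ?node_numE; lia.
Qed.

Lemma rval_chain_row i : rval (Tk n.+1) chain_row i = (i \in chain_nums 1 1 bs).
Proof.
rewrite /rval /=; have [i_in|i_out] := boolP (i \in iota 1 (mk n.+1)).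
  by rewrite (nth_map 0) ?index_mem // nth_index.
rewrite nth_default ?size_map ?memNindex //; apply/esym/negP => /chain_nums_bound.
by rewrite mem_iota in i_out; lia.
Qed.

Lemma dval_chain_vec x : 0 < x -> dval chain_vec x = (x \in chain_nums 1 1 bs).
Proof.
rewrite /dval /chain_vec => x_pos; have [x_le|x_gt] := leqP x (mk n.+1).
  by rewrite (nth_map 0) ?nth_iota ?size_iota ?add1n ?prednK //; lia.
rewrite nth_default ?size_map ?size_iota; last lia.
by apply/esym/negP => /chain_nums_bound; lia.
Qed.

Lemma nu_chain_row y : y \in nu n.+1 chain_vec -> y = node_num n.+1 (count id bs).+1.
Proof.
have top : 1 \in chain_nums 1 1 bs := map_f _ (chain_head 1 1 bs).
rewrite /nu dval_chain_vec // top cat0s => /mapP [[s j] + ->].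
rewrite mem_filter => /andP [/andP [sj_vec sj_cond] /allpairsPdep [s' [j' [s_in j_in [E_s E_j]]]]].
subst s' j'; rewrite /= in sj_vec sj_cond; rewrite !mem_iota in s_in j_in.
have sj : 0 < j <= s by lia.
rewrite dval_chain_vec ?mem_chain_nums // in sj_vec; last by apply: node_num_gt0; lia.
have [s_lt|s_ge] := ltnP s n.+1.
  move: sj_cond; rewrite s_lt !dval_chain_vec ?node_num_gt0 //; last lia.
  have := chain_succ sj_vec; rewrite size_bs add1n => /(_ s_lt) /orP [] child;
    by rewrite (chain_nums_of child) ?andbF.
have s_top : s = n.+1 by lia.
have last_node := chain_last 1 1 bs; rewrite size_bs !add1n -s_top in last_node.
by rewrite (chain_same_layer sj_vec last_node) s_top.
Qed.

Lemma sat_zeros_chain_row w :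
  sat (Tk n.+1) chain_row (zeros w) = avoids [seq q.1 | q <- zeros w] 1 1 bs.
Proof.
rewrite /sat /avoids has_sym -all_predC all_map.
apply: eq_in_all => -[i b]; rewrite mem_filter /= => /andP [/negbTE -> _].
by rewrite rval_chain_row eqbF_neg.
Qed.

End ChainRows.

Lemma chain_rows_common_decision n bs1 bs2 (rs : seq row) d :
  size bs1 = n -> size bs2 = n -> chain_row n bs1 \in rs -> chain_row n bs2 \in rs ->
  in_Pi rs d -> count id bs1 = count id bs2.
Proof.
move=> size1 size2 row1 row2 /allP d_rs.
move: (nu_chain_row size2 (d_rs _ row2)); rewrite (nu_chain_row size1 (d_rs _ row1)).
by rewrite !node_numE => /addnI [].
Qed.

Lemma size_path_le_depth t (p : word * nat) : p \in dt_paths t -> size p.1 <= dt_depth t.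
Proof.
by move=> p_t; apply: (@leq_bigmax_seq _ _ xpredT (fun q : word * nat => size q.1) p p_t).
Qed.

Theorem lemma9 (k : nat) : 0 < k ->
  forall t : dtree, is_det_tree (Tk k) t -> k.-1 <= dt_depth t.
Proof.
case: k => // n _ t /and4P [_ _ t_cov t_Pi] /=; rewrite leqNgt; apply/negP => depth_lt.
pose S := [seq chain_row n bs | bs <- all_tuples n].
have S_ne : S != [::] by rewrite /S; case: (all_tuples n) (all_tuples_nseq n false).
have S_cov : {in S, forall r, covers (Tk n.+1) t r}.
  by move=> _ /mapP [bs bs_n ->]; apply: (allP t_cov); apply: chain_row_in.
have [p p_t [/hasP [_ /mapP [bs0 bs0_n ->] bs0_sat] S_sat]] := adversary_path S_ne S_cov.
pose Z := [seq q.1 | q <- zeros p.1].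
have Z_lt : size Z < n.
  by rewrite size_map (leq_ltn_trans (size_zeros _)) ?(leq_ltn_trans (size_path_le_depth p_t)).
rewrite mem_all_tuples in bs0_n; move/eqP: bs0_n => size0.
have bs0_av : exists2 bs, size bs = n & avoids Z 1 1 bs.
  by exists bs0; rewrite // -(sat_zeros_chain_row size0).
have [bs1 [bs2 [size1 size2 av1 av2 /eqP []]]] :=
  two_chain_endpoints (s := 1) (j := 1) isT Z_lt bs0_av.
have on_path bs : size bs = n -> avoids Z 1 1 bs -> chain_row n bs \in subrows (Tk n.+1) p.1.
  move=> size_bs Z_av; rewrite mem_filter chain_row_in // andbT S_sat ?sat_zeros_chain_row //.
  by rewrite map_f // mem_all_tuples size_bs.
have /orP [/eqP p_nil|] := allP t_Pi p p_t; first by have := on_path _ size1 av1; rewrite p_nil.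
exact: chain_rows_common_decision size1 size2 (on_path _ size1 av1) (on_path _ size2 av2).
Qed.
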